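(* Every statistically Cauchy sequence in an $S$-metric space $(X,S)$ is statistically bounded.
   Context: An $S$-metric on a nonempty set $X$ is a function $S:X^3\to[0,\infty)$ such that for all $x,y,z,a\in X$: $S(x,y,z)=0$ if and only if $x=y=z$, and $S(x,y,z)\le S(x,x,a)+S(y,y,a)+S(z,z,a)$. For $B\subset\mathbb N$ the natural density is $\delta(B)=\lim_{n\to\infty}\frac{|\{k\in B:k\le n\}|}{n}$ when the limit exists. A sequence $\{x_n\}$ is statistically Cauchy if for every $\varepsilon>0$ there exists $N\in\mathbb N$ with $\delta(\{n: S(x_n,x_n,x_N)\ge\varepsilon\})=0$. A sequence $\{x_n\}$ is statistically bounded if for any fixed $u\in X$ there exists a positive real number $B$ such that $\delta(\{n\in\mathbb N: S(x_n,x_n,u)\ge B\})=0$. *)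

From Stdlib Require Import Reals Lra ClassicalEpsilon.
From Coquelicot Require Import Coquelicot.
Open Scope R_scope.

Definition is_S_metric {X : Type} (S : X -> X -> X -> R) : Prop :=
  (forall x y z, 0 <= S x y z) /\
  (forall x y z, S x y z = 0 <-> (x = y /\ y = z)) /\
  (forall x y z a, S x y z <= S x x a + S y y a + S z z a).

(* number of k in B with 1 <= k <= n  (N = {1,2,...}) *)
Fixpoint count_upto (B : nat -> Prop) (n : nat) : nat :=
  match n with
  | O => O
  | S m => (if excluded_middle_informative (B (S m)) then 1 else 0)%nat
           + count_upto B m
  end.

Definition has_density (B : nat -> Prop) (d : R) : Prop :=
  is_lim_seq (fun n => INR (count_upto B n) / INR n) d.

(* sequences x : nat -> X, only indices n >= 1 are relevant *)
Definition stat_cauchy {X : Type} (S : X -> X -> X -> R) (x : nat -> X) : Prop :=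
  forall eps, 0 < eps ->
    exists N : nat, (1 <= N)%nat /\
      has_density (fun n => S (x n) (x n) (x N) >= eps) 0.

Definition stat_bounded {X : Type} (S : X -> X -> X -> R) (x : nat -> X) : Prop :=
  forall u : X, exists B : R, 0 < B /\
      has_density (fun n => S (x n) (x n) u >= B) 0.

From Stdlib Require Import Reals Lra Lia ClassicalEpsilon.
From Coquelicot Require Import Coquelicot.
Open Scope R_scope.

(* By the S-metric triangle inequality, S(x_n, x_n, u) <= 2 S(x_n, x_n, x_N) + S(u, u, x_N).
   Choosing x_N for eps = 1, every n with S(x_n, x_n, u) >= 2 + S(u, u, x_N) has
   S(x_n, x_n, x_N) >= 1, so it lies in a set of density zero; subsets of density-zero
   sets have density zero. *)

Lemma count_upto_mono (A B : nat -> Prop) (n : nat) :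
  (forall k, A k -> B k) -> (count_upto A n <= count_upto B n)%nat.
Proof.
  intros AB; induction n as [|n IH]; simpl; [lia|].
  destruct (excluded_middle_informative (A (S n)));
  destruct (excluded_middle_informative (B (S n))); try lia.
  exfalso; auto.
Qed.

Lemma has_density0_subset (A B : nat -> Prop) :
  (forall k, A k -> B k) -> has_density B 0 -> has_density A 0.
Proof.
  intros AB HB.
  apply is_lim_seq_le_le with (u := fun _ => 0)
    (w := fun n => INR (count_upto B n) / INR n); [|apply is_lim_seq_const|exact HB].
  intros [|m].
  - simpl; unfold Rdiv; rewrite Rmult_0_l; lra.
  - assert (Hm : 0 < INR (S m)) by (apply lt_0_INR; lia).
    pose proof (le_INR _ _ (count_upto_mono A B (S m) AB)).
    pose proof (pos_INR (count_upto A (S m))).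
    split.
    + apply Rdiv_le_0_compat; lra.
    + apply Rmult_le_compat_r; [left; apply Rinv_0_lt_compat|]; lra.
Qed.

Lemma S_metric_le_center (X : Type) (S : X -> X -> X -> R) (y u a : X) :
  is_S_metric S -> S y y u <= 2 * S y y a + S u u a.
Proof.
  intros [_ [_ Htri]]; pose proof (Htri y y u a); lra.
Qed.

Theorem theorem3p7 (X : Type) (S : X -> X -> X -> R) (x : nat -> X) :
  is_S_metric S -> stat_cauchy S x -> stat_bounded S x.
Proof.
  intros HS Hc u.
  destruct (Hc 1 Rlt_0_1) as [N [_ HN]].
  exists (2 + S u u (x N)); split.
  - pose proof (proj1 HS u u (x N)); lra.
  - apply has_density0_subset with (2 := HN).
    intros k Hk; pose proof (S_metric_le_center X S (x k) u (x N) HS); lra.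
Qed.
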